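(* Let $X$ be a reflexive complex Banach space, let $A$ be a positive self-adjoint operator from $X$ to $X^\ast$, and let $E$ be a bounded linear operator on $X$ such that $E(\operatorname{dom}A)\subseteq\operatorname{dom}A$ and $E^\ast A\subseteq AE$. Let $\hat E$ denote the bounded operator on $H_A$ obtained by continuous extension of the bounded operator $Ax\mapsto AEx$ on $\operatorname{ran}A$. Then $\hat E$ is a self-adjoint operator on the Hilbert space $H_A$.
   Context: $X^\ast$ denotes the conjugate dual of $X$ (continuous conjugate-linear functionals on $X$); $X$ is identified with $X^{\ast\ast}$. For $v\in X^\ast$, $x\in X$ write $(v,x):=v(x)$ and $(x,v):=\overline{v(x)}$. An operator $A$ from $X$ to $X^\ast$ is positive if $(Ax,x)\ge0$ for all $x\in\operatorname{dom}A$; its adjoint $A^\ast$ has domain $\{y\in X:x\mapsto(Ax,y)\text{ continuous on }\operatorname{dom}A\}$ and is determined by $(x,A^\ast y)=(Ax,y)$; $A$ is self-adjoint if $A=A^\ast$. For a bounded operator $E$ on $X$, $E^\ast$ is the bounded operator on $X^\ast$ with $(E^\ast v,x)=(v,Ex)$. $H_A$ is the completion of $\operatorname{ran}A$ with respect to the inner product $[Ax,Ay]_A:=(Ax,y)$. Under the stated hypotheses, $Ax\mapsto AEx$ is a well-defined bounded linear operator on $\operatorname{ran}A$ with respect to the $H_A$-norm. *)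

From HB Require Import structures.
From mathcomp Require Import all_boot all_order all_algebra.
From mathcomp Require Import all_classical all_reals all_analysis.
From mathcomp Require Import complex.
Import Order.TTheory GRing.Theory Num.Theory.
Import numFieldTopology.Exports numFieldNormedType.Exports.
Local Open Scope ring_scope.
Local Open Scope classical_set_scope.

Set Implicit Arguments. Unset Strict Implicit. Unset Printing Implicit Defensive.

Definition CC (R : realType) : numClosedFieldType := (R[i] : numClosedFieldType).

Section Defs.
Variable R : realType.
Local Notation C := (CC R).
Variable X : completeNormedModType C.

Definition conj_linear (v : X -> C) : Prop :=
  forall (c : C) (x y : X), v (c *: x + y) = c^* * v x + v y.

(* elements of the conjugate dual X^* : continuous conjugate-linear functionals *)
Definition dual_elt (v : X -> C) : Prop := conj_linear v /\ continuous v.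

Definition dual_norm_le (v : X -> C) (r : C) : Prop :=
  0 <= r /\ forall x : X, `|v x| <= r * `|x|.

(* continuous (= bounded) conjugate-linear functionals on X^*, i.e. elements of X^** *)
Definition bidual_elt (Phi : (X -> C) -> C) : Prop :=
  (forall (c : C) (v w : X -> C), dual_elt v -> dual_elt w ->
      Phi (fun x => c * v x + w x) = c^* * Phi v + Phi w) /\
  (exists M : C, forall (v : X -> C) (r : C), dual_elt v -> dual_norm_le v r ->
      `|Phi v| <= M * r).

(* X is reflexive: the canonical map x |-> (v |-> (x, v) = conj (v x)) from X to X^** is onto *)
Definition reflexive_space : Prop :=
  forall Phi : (X -> C) -> C, bidual_elt Phi ->
    exists x : X, forall v : X -> C, dual_elt v -> Phi v = (v x)^*.

Definition operator_to_dual (D : set X) (A : X -> (X -> C)) : Prop :=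
  D 0 /\
  (forall (c : C) (x y : X), D x -> D y -> D (c *: x + y)) /\
  (forall (c : C) (x y : X), D x -> D y ->
      A (c *: x + y) = (fun z => c * A x z + A y z)) /\
  (forall x : X, D x -> dual_elt (A x)).

Definition positive_op (D : set X) (A : X -> (X -> C)) : Prop :=
  forall x : X, D x -> 0 <= A x x.

(* graph of the adjoint A^* : pairs (y, w) in X x X^* with (x, w) = (Ax, y) for all x in dom A,
   where (x, w) := conj (w x) and (Ax, y) := (A x) y. *)
Definition adjoint_graph (D : set X) (A : X -> (X -> C)) (y : X) (w : X -> C) : Prop :=
  dual_elt w /\ forall x : X, D x -> (w x)^* = A x y.

Definition selfadjoint_op (D : set X) (A : X -> (X -> C)) : Prop :=
  forall (y : X) (w : X -> C), (D y /\ w = A y) <-> adjoint_graph D A y w.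

Definition banach_adjoint (E : X -> X) (v : X -> C) : X -> C := fun x => v (E x).

End Defs.

Section Hilbert.
Variable R : realType.
Local Notation C := (CC R).
Variable H : completeNormedModType C.

Definition inner_product_of_norm (ip : H -> H -> C) : Prop :=
  (forall (a : C) (u v w : H), ip (a *: u + v) w = a * ip u w + ip v w) /\
  (forall u v : H, ip v u = (ip u v)^*) /\
  (forall u : H, ip u u = `|u| ^+ 2).

Definition selfadjoint_bounded (ip : H -> H -> C) (T : H -> H) : Prop :=
  forall u v : H, ip (T u) v = ip u (T v).
End Hilbert.

(* On the dense subspace J(ran A) of H_A the operator Ehat is symmetric:
   [Ehat Ax, Ay]_A = (AEx, y) = (E^* Ax, y) = (Ax, Ey) = [Ax, Ehat Ay]_A.
   Both sides of [Ehat u, v] = [u, Ehat v] are continuous in u and in v, since an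
   inner product is continuous in each variable (polarization expresses it through
   the norm), so the identity extends from the dense subspace to all of H_A. *)
From HB Require Import structures.
From mathcomp Require Import all_boot all_order all_algebra.
From mathcomp Require Import all_classical all_reals all_analysis.
From mathcomp Require Import complex ring.
Import Order.TTheory GRing.Theory Num.Theory.
Import numFieldTopology.Exports numFieldNormedType.Exports.
Local Open Scope ring_scope.
Local Open Scope classical_set_scope.

Set Implicit Arguments.
Unset Strict Implicit.
Unset Printing Implicit Defensive.

Lemma continuous_dense_eq (T : topologicalType) (K : numFieldType)
    (V : normedModType K) (S : set T) (f g : T -> V) :
  closure S = setT -> continuous f -> continuous g ->
  (forall x, S x -> f x = g x) -> f =1 g.
Proof.
move=> denseS cf cg fg x.
pose h t := f t - g t.
have closed_h0 : closed (h @^-1` [set 0]).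
  apply: preimage_closed; first by move=> t _; exact: continuousB (cf t) (cg t).
  exact: (accessible_closed_set1 (hausdorff_accessible (@norm_hausdorff K V))).
have : closure S `<=` h @^-1` [set 0].
  rewrite ((closure_id _).1 closed_h0); apply: closureS => t St.
  by rewrite /= /h fg // subrr.
by rewrite denseS => /(_ x I) /eqP; rewrite subr_eq0 => /eqP.
Qed.

Section InnerProduct.
Variables (R : realType) (H : completeNormedModType (CC R)) (ip : H -> H -> CC R).
Hypothesis ipH : inner_product_of_norm ip.

Lemma ipDl a u v w : ip (a *: u + v) w = a * ip u w + ip v w.
Proof. by case: ipH => ->. Qed.

Lemma ipC u v : ip v u = (ip u v)^*.
Proof. by case: ipH => _ []. Qed.

Lemma ipDr a u v w : ip w (a *: u + v) = a^* * ip w u + ip w v.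
Proof. by rewrite ipC ipDl rmorphD rmorphM /= -!ipC. Qed.

Lemma ip_norm u : ip u u = `|u| ^+ 2.
Proof. by case: ipH => _ []. Qed.

Lemma ip_polarization u w : ip u w = 4^-1 *
  (`|u + w| ^+ 2 - `|u - w| ^+ 2 + 'i * `|u + 'i *: w| ^+ 2
   - 'i * `|u - 'i *: w| ^+ 2).
Proof.
have sq c : `|u + c *: w| ^+ 2 =
    ip u u + c^* * ip u w + c * ip w u + c * c^* * ip w w.
  by rewrite -ip_norm addrC ipDl !ipDr; ring.
rewrite -[w in u + w]scale1r -[- w]scaleN1r -[- ('i *: w)]scaleNr !sq.
have conjNi : (- 'i : CC R)^* = 'i by rewrite -conjCi conjCK.
rewrite rmorph1 rmorphN1 conjNi conjCi.
have four_neq0 : (4 : CC R) != 0 by rewrite pnatr_eq0.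
apply: (mulfI four_neq0); rewrite mulrA mulfV // mul1r.
ring: (sqrCi (CC R)).
Qed.

Lemma continuous_ipl w : continuous (ip ^~ w).
Proof.
have norm_sq v : continuous (fun u : H => `|u + v| ^+ 2).
  have cnorm : continuous (fun u : H => `|u + v|).
    move=> u; apply: (continuous_comp (f := fun u => u + v)).
      exact: continuousD cvg_id (cvg_cst _).
    exact: norm_continuous.
  by move=> u; exact: continuousM (cnorm u) (cnorm u).
have i_norm_sq v : continuous (fun u : H => 'i * `|u + v| ^+ 2).
  by move=> u; apply: cvgM; [exact: cvg_cst | exact: norm_sq].
rewrite (funext (ip_polarization ^~ w)) => u.
apply: cvgM; first exact: cvg_cst.
apply: cvgB; last exact: i_norm_sq.
apply: cvgD; last exact: i_norm_sq.
by apply: cvgB; exact: norm_sq.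
Qed.

Lemma selfadjoint_bounded_dense (S : set H) (T : H -> H) :
  closure S = setT -> continuous T ->
  (forall u v, S u -> S v -> ip (T u) v = ip u (T v)) ->
  selfadjoint_bounded ip T.
Proof.
move=> denseS cT symS.
have cTl v : continuous (fun u => ip (T u) v).
  by move=> u; exact: continuous_comp (cT u) (@continuous_ipl v (T u)).
have symSr u v : S v -> ip (T u) v = ip u (T v).
  move=> Sv; move: u.
  apply: (@continuous_dense_eq _ _ _ _ (fun u => ip (T u) v) _ denseS).
  - exact: cTl.
  - exact: continuous_ipl.
  - by move=> u Su; exact: symS.
move=> u v; rewrite ipC [RHS]ipC; congr (_^*); move: v.
apply: (@continuous_dense_eq _ _ _ _ (fun v => ip v (T u)) _ denseS).
- exact: continuous_ipl.
- exact: cTl.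
- by move=> v Sv; rewrite [RHS]ipC -(symSr u v Sv) -ipC.
Qed.

End InnerProduct.

Theorem lemma5 (R : realType) (X : completeNormedModType (CC R))
  (D : set X) (A : X -> (X -> CC R)) (E : {linear X -> X})
  (H : completeNormedModType (CC R)) (ip : H -> H -> CC R)
  (J : (X -> CC R) -> H) (Ehat : {linear H -> H}) :
  reflexive_space X ->
  operator_to_dual D A -> positive_op D A -> selfadjoint_op D A ->
  continuous E ->
  (forall x, D x -> D (E x)) ->
  (forall x, D x -> D (E x) /\ banach_adjoint E (A x) = A (E x)) ->
  (* (H, ip) is H_A: a Hilbert space together with an inner-product-preserving
     linear map J of ran A (with [Ax, Ay]_A = (Ax, y)) onto a dense subspace *)
  inner_product_of_norm ip ->
  (forall (c : CC R) (x y : X), D x -> D y ->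
      J (A (c *: x + y)) = c *: J (A x) + J (A y)) ->
  (forall x y : X, D x -> D y -> ip (J (A x)) (J (A y)) = A x y) ->
  closure [set J (A x) | x in D] = setT ->
  (* Ehat is the continuous extension of  Ax |-> AEx *)
  continuous Ehat ->
  (forall x, D x -> Ehat (J (A x)) = J (A (E x))) ->
  selfadjoint_bounded ip Ehat.
Proof.
move=> _ _ _ _ _ _ EA ipH _ ipJ denseJ cEhat EhatJ.
apply: (selfadjoint_bounded_dense ipH denseJ cEhat) => _ _ [x Dx <-] [y Dy <-].
have [DEx AEx] := EA x Dx; have [DEy _] := EA y Dy.
by rewrite !EhatJ // !ipJ // -AEx.
Qed.
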